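(* Suppose Assumptions A and B hold. Suppose moreover that for every $(\hat x,\hat t)\in\mathcal D_{\mathrm{SDP}}$ with $\mathcal F(\hat x)$ semidefinite, $(\hat x,\hat t)$ can be written as a convex combination of finitely many points $(x_\alpha,t_\alpha)\in\mathcal D_{\mathrm{SDP}}$ with $\operatorname{affdim}(\mathcal F(x_\alpha))>\operatorname{affdim}(\mathcal F(\hat x))$ for each $\alpha$. Then $\operatorname{conv}(\mathcal D)=\mathcal D_{\mathrm{SDP}}$ and $\mathrm{Opt}=\mathrm{Opt}_{\mathrm{SDP}}$.
   Context: Fix integers $N\ge 1$, $m_I,m_E\ge 0$, $m:=m_I+m_E\ge 1$; $[a,b]=\{a,\dots,b\}$, $[n]=[1,n]$. For $i\in[0,m]$ let $q_i(x)=x^\top A_ix+2b_i^\top x+c_i$ with $A_i\in\mathbb S^N$, $b_i\in\mathbb R^N$, $c_i\in\mathbb R$. $\mathrm{Opt}:=\inf\{q_0(x): q_i(x)\le 0\ \forall i\in[m_I],\ q_i(x)=0\ \forall i\in[m_I+1,m]\}$ and $\mathcal D:=\{(x,t)\in\mathbb R^N\times\mathbb R: q_0(x)\le 2t,\ q_i(x)\le0\ \forall i\in[m_I],\ q_i(x)=0\ \forall i\in[m_I+1,m]\}$. Let $Q_i=\begin{pmatrix}c_i& b_i^\top\\ b_i& A_i\end{pmatrix}$; $\mathrm{Opt}_{\mathrm{SDP}}:=\inf\{\langle Q_0,Y\rangle: Y=\begin{pmatrix}1&x^\top\\ x& X\end{pmatrix}\succeq 0,\ X\in\mathbb S^N,\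 \langle Q_i,Y\rangle\le 0\ \forall i\in[m_I],\ \langle Q_i,Y\rangle=0\ \forall i\in[m_I+1,m]\}$ and $\mathcal D_{\mathrm{SDP}}:=\{(x,t):\exists X\in\mathbb S^N$ with $Y=\begin{pmatrix}1&x^\top\\ x& X\end{pmatrix}\succeq0$, $\langle Q_0,Y\rangle\le 2t$, and the same constraints$\}$. For $\gamma\in\mathbb R^m$, $A(\gamma)=A_0+\sum\gamma_iA_i$, $q(\gamma,x)=q_0(x)+\sum\gamma_iq_i(x)$, $\Gamma:=\{\gamma: A(\gamma)\succeq0,\ \gamma_i\ge0\ \forall i\in[m_I]\}$. Assumption A: the QCQP is feasible and some $\gamma^*$ with $\gamma^*_i\ge0$ ($i\in[m_I]$) has $A(\gamma^* )\succ0$. Assumption B: for every $\hat x$, if $\sup_{\gamma\in\Gamma}q(\gamma,\hat x)$ is finite it is attained. Then $\mathcal F(\hat x):=\arg\max_{\gamma\in\Gamma}q(\gamma,\hat x)$, a nonempty face of $\Gamma$, defined whenever the supremum is finite (in particular for $(\hat x,\hat t)\in\mathcal D_{\mathrm{SDP}}$). A nonempty face is definite if it contains $\gamma$ with $A(\gamma)\succ0$, semidefinite otherwise. $\operatorname{affdim}$ denotes the dimension of the affine hull. *)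

From Stdlib Require Import Reals List.
Import ListNotations.
Open Scope R_scope.

Fixpoint rsum (n : nat) (f : nat -> R) : R :=
  match n with O => 0 | S k => rsum k f + f k end.
Definition rsum1 (m : nat) (f : nat -> R) : R := rsum m (fun i => f (S i)).
Definition lsum {A : Type} (f : A -> R) (l : list A) : R :=
  fold_right (fun a acc => f a + acc) 0 l.

(* vectors / matrices: only indices below the dimension are meaningful *)
Definition vec := nat -> R.
Definition mat := nat -> nat -> R.

Definition quadf (n : nat) (M : mat) (v : vec) : R :=
  rsum n (fun i => rsum n (fun j => v i * M i j * v j)).
Definition symm (n : nat) (M : mat) : Prop :=
  forall i j, (i < n)%nat -> (j < n)%nat -> M i j = M j i.
Definition psd (n : nat) (M : mat) : Prop :=
  symm n M /\ forall v : vec, 0 <= quadf n M v.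
Definition pd (n : nat) (M : mat) : Prop :=
  symm n M /\ forall v : vec, (exists i, (i < n)%nat /\ v i <> 0) -> 0 < quadf n M v.
Definition frob (n : nat) (M Y : mat) : R :=
  rsum n (fun r => rsum n (fun s => M r s * Y r s)).

(* QCQP data: q_i(x) = x^T A_i x + 2 b_i^T x + c_i, i in [0, mI+mE] *)
Record qcqp := Qcqp {
  dimN : nat; mI : nat; mE : nat;
  Am : nat -> mat; bv : nat -> vec; cs : nat -> R }.

Section Q.
Variable P : qcqp.
Let N := dimN P.
Definition mm : nat := (mI P + mE P)%nat.

Definition qf (i : nat) (x : vec) : R :=
  quadf N (Am P i) x + 2 * rsum N (fun j => bv P i j * x j) + cs P i.

Definition feasible (x : vec) : Prop :=
  (forall i, (1 <= i <= mI P)%nat -> qf i x <= 0) /\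
  (forall i, (mI P + 1 <= i <= mm)%nat -> qf i x = 0).

Definition inD (x : vec) (t : R) : Prop := qf 0 x <= 2 * t /\ feasible x.

Definition Qmat (i : nat) : mat := fun r s =>
  match r, s with
  | O, O => cs P i
  | O, S l => bv P i l
  | S k, O => bv P i k
  | S k, S l => Am P i k l
  end.
Definition Ymat (x : vec) (X : mat) : mat := fun r s =>
  match r, s with
  | O, O => 1
  | O, S l => x l
  | S k, O => x k
  | S k, S l => X k l
  end.

Definition sdp_feasible (x : vec) (X : mat) : Prop :=
  symm N X /\ psd (N + 1) (Ymat x X) /\
  (forall i, (1 <= i <= mI P)%nat -> frob (N + 1) (Qmat i) (Ymat x X) <= 0) /\
  (forall i, (mI P + 1 <= i <= mm)%nat -> frob (N + 1) (Qmat i) (Ymat x X) = 0).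

Definition inDSDP (x : vec) (t : R) : Prop :=
  exists X : mat, sdp_feasible x X /\ frob (N + 1) (Qmat 0) (Ymat x X) <= 2 * t.

(* objective value sets whose infima are Opt and Opt_SDP *)
Definition OptSet (s : R) : Prop := exists x, feasible x /\ s = qf 0 x.
Definition SDPSet (s : R) : Prop :=
  exists x X, sdp_feasible x X /\ s = frob (N + 1) (Qmat 0) (Ymat x X).

(* Lagrangian side; gamma : nat -> R, only indices in [1,m] matter *)
Definition Amat (g : vec) : mat := fun r s =>
  Am P 0 r s + rsum1 mm (fun i => g i * Am P i r s).
Definition inGamma (g : vec) : Prop :=
  psd N (Amat g) /\ forall i, (1 <= i <= mI P)%nat -> 0 <= g i.
Definition qg (g : vec) (x : vec) : R := qf 0 x + rsum1 mm (fun i => g i * qf i x).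

Definition inF (x : vec) (g : vec) : Prop :=
  inGamma g /\ forall g', inGamma g' -> qg g' x <= qg g x.

Definition AssumptionA : Prop :=
  (exists x, feasible x) /\
  (exists g, (forall i, (1 <= i <= mI P)%nat -> 0 <= g i) /\ pd N (Amat g)).

Definition AssumptionB : Prop :=
  forall xh : vec, (exists M, forall g, inGamma g -> qg g xh <= M) ->
    exists g, inF xh g.

Definition semidef_face (x : vec) : Prop :=
  (exists g, inF x g) /\ forall g, inF x g -> ~ pd N (Amat g).
End Q.

(* Affine independence of p0, p_1..p_k in R^m (coordinates 1..m) *)
Definition aff_indep (m : nat) (p0 : vec) (ps : list vec) : Prop :=
  forall l : nat -> R,
    (forall j, (1 <= j <= m)%nat ->
       rsum (length ps) (fun k => l k * (nth k ps p0 j - p0 j)) = 0) ->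
    forall k, (k < length ps)%nat -> l k = 0.
Definition has_aff_indep (m : nat) (S : vec -> Prop) (d : nat) : Prop :=
  exists p0 ps, length ps = d /\ S p0 /\ Forall S ps /\ aff_indep m p0 ps.
Definition AffDim (m : nat) (S : vec -> Prop) (d : nat) : Prop :=
  has_aff_indep m S d /\ ~ has_aff_indep m S (Datatypes.S d).

Definition affdim_gt (P : qcqp) (x xh : vec) : Prop :=
  exists d1 d2, AffDim (mm P) (inF P x) d1 /\ AffDim (mm P) (inF P xh) d2 /\ (d2 < d1)%nat.

Definition in_conv (n : nat) (S : vec -> R -> Prop) (x : vec) (t : R) : Prop :=
  exists l : list (R * (vec * R)),
    Forall (fun a => 0 <= fst a /\ S (fst (snd a)) (snd (snd a))) l /\
    lsum (fun a => fst a) l = 1 /\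
    (forall j, (j < n)%nat -> x j = lsum (fun a => fst a * fst (snd a) j) l) /\
    t = lsum (fun a => fst a * snd (snd a)) l.

Inductive xR := Fin (r : R) | PInf | NInf.
Definition IsInf (S : R -> Prop) (v : xR) : Prop :=
  match v with
  | Fin r => (forall s, S s -> r <= s) /\
             (forall r', (forall s, S s -> r' <= s) -> r' <= r)
  | NInf => forall r, exists s, S s /\ s < r
  | PInf => forall s, ~ S s
  end.

From Stdlib Require Import Reals List Lra Lia Psatz Classical.
Open Scope R_scope.

(* D is contained in D_SDP through the rank-one lift Y = (1, x)(1, x)^T, and D_SDP is convex, so
   conv D is contained in D_SDP.  Conversely, for (x, t) in D_SDP Fejér's theorem (<A, B> >= 0 for
   psd A, B) gives weak duality q(gamma, x) <= 2t on Gamma, so by Assumption B the face F(x) exists.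
   If F(x) contains gamma with A(gamma) positive definite, gamma stays in Gamma under small moves of
   each multiplier; maximality then yields feasibility and complementary slackness, hence
   q_0(x) = q(gamma, x) <= 2t and (x, t) lies in D.  Otherwise the hypothesis splits (x, t) into
   points whose faces have larger affine dimension; affine dimensions in R^m are at most m, so
   after m + 1 splittings every point lies in conv D.  Equal convex hulls give equal infima, since
   a lower bound of q_0 on the feasible set bounds every convex combination of points of D. *)

Lemma rsum_ext n f g : (forall i, (i < n)%nat -> f i = g i) -> rsum n f = rsum n g.
Proof.
  induction n as [|n IH]; intros H; simpl; [reflexivity|].
  rewrite IH by (intros; apply H; lia). rewrite H by lia. reflexivity.
Qed.

Lemma rsum_plus n f g : rsum n (fun i => f i + g i) = rsum n f + rsum n g.
Proof. induction n; simpl; [lra|]. rewrite IHn. lra. Qed.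

Lemma rsum_scal n c f : rsum n (fun i => c * f i) = c * rsum n f.
Proof. induction n; simpl; [lra|]. rewrite IHn. lra. Qed.

Lemma rsum_opp n f : rsum n (fun i => - f i) = - rsum n f.
Proof. induction n; simpl; [lra|]. rewrite IHn. lra. Qed.

Lemma rsum_minus n f g : rsum n (fun i => f i - g i) = rsum n f - rsum n g.
Proof. unfold Rminus. rewrite rsum_plus, rsum_opp. reflexivity. Qed.

Lemma rsum_0 n f : (forall i, (i < n)%nat -> f i = 0) -> rsum n f = 0.
Proof.
  intros H. transitivity (rsum n (fun _ => 0)); [now apply rsum_ext|].
  induction n; simpl; [reflexivity|]. rewrite IHn by (intros; apply H; lia). lra.
Qed.

Lemma rsum_le n f g : (forall i, (i < n)%nat -> f i <= g i) -> rsum n f <= rsum n g.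
Proof.
  induction n; intros H; simpl; [lra|].
  assert (rsum n f <= rsum n g) by (apply IHn; intros; apply H; lia).
  assert (f n <= g n) by (apply H; lia). lra.
Qed.

Lemma rsum_nonneg n f : (forall i, (i < n)%nat -> 0 <= f i) -> 0 <= rsum n f.
Proof. intros H. rewrite <- (rsum_0 n (fun _ => 0)) by auto. now apply rsum_le. Qed.

Lemma rsum_ge_term n f p :
  (p < n)%nat -> (forall i, (i < n)%nat -> 0 <= f i) -> f p <= rsum n f.
Proof.
  induction n; intros Hp H; simpl; [lia|].
  destruct (Nat.eq_dec p n) as [->|Hne].
  - assert (0 <= rsum n f) by (apply rsum_nonneg; intros; apply H; lia). lra.
  - assert (f p <= rsum n f) by (apply IHn; [lia|intros; apply H; lia]).
    assert (0 <= f n) by (apply H; lia). lra.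
Qed.

Lemma rsum_shift n f : rsum (S n) f = f 0%nat + rsum n (fun i => f (S i)).
Proof. induction n; simpl in *; [lra|]. rewrite IHn. lra. Qed.

Lemma rsum_comm n m (f : nat -> nat -> R) :
  rsum n (fun i => rsum m (fun j => f i j)) = rsum m (fun j => rsum n (fun i => f i j)).
Proof.
  induction n; simpl.
  - symmetry. now apply rsum_0.
  - rewrite IHn, <- rsum_plus. reflexivity.
Qed.

Lemma rsum_mult n m a b :
  rsum n (fun i => rsum m (fun j => a i * b j)) = rsum n a * rsum m b.
Proof.
  rewrite (rsum_ext n _ (fun i => rsum m b * a i)), rsum_scal; [lra|].
  intros. rewrite Rmult_comm, <- rsum_scal. apply rsum_ext. intros. ring.
Qed.

Lemma rsum_update n f g p :
  (p < n)%nat -> (forall k, (k < n)%nat -> k <> p -> g k = f k) ->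
  rsum n g = rsum n f + (g p - f p).
Proof.
  intros Hp H.
  enough (rsum n (fun i => g i - f i) = g p - f p) as E by (rewrite rsum_minus in E; lra).
  induction n as [|n IH]; simpl; [lia|].
  destruct (Nat.eq_dec p n) as [->|Hne].
  - rewrite rsum_0; [lra|]. intros i Hi. rewrite H by lia. ring.
  - rewrite IH, (H n) by (lia || (intros; apply H; lia)). ring.
Qed.

(** * Quadratic forms, Schur complements and Fejér's theorem *)

Lemma quadf_ext n M M' v :
  (forall r s, (r < n)%nat -> (s < n)%nat -> M r s = M' r s) -> quadf n M v = quadf n M' v.
Proof.
  intros H. unfold quadf. apply rsum_ext; intros. apply rsum_ext; intros. now rewrite H.
Qed.

Lemma quadf_extv n M v v' : (forall i, (i < n)%nat -> v i = v' i) -> quadf n M v = quadf n M v'.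
Proof.
  intros H. unfold quadf. apply rsum_ext; intros. apply rsum_ext; intros. now rewrite !H.
Qed.

Lemma frob_ext n A A' B B' :
  (forall r s, (r < n)%nat -> (s < n)%nat -> A r s = A' r s /\ B r s = B' r s) ->
  frob n A B = frob n A' B'.
Proof.
  intros H. unfold frob. apply rsum_ext; intros r Hr. apply rsum_ext; intros s Hs.
  destruct (H r s Hr Hs) as [-> ->]. reflexivity.
Qed.

Lemma quadf_lin n M M' c v :
  quadf n (fun r s => M r s + c * M' r s) v = quadf n M v + c * quadf n M' v.
Proof.
  unfold quadf. rewrite <- rsum_scal, <- rsum_plus. apply rsum_ext; intros.
  rewrite <- rsum_scal, <- rsum_plus. apply rsum_ext; intros. ring.
Qed.

Lemma frob_lin_l n M M' c B :
  frob n (fun r s => M r s + c * M' r s) B = frob n M B + c * frob n M' B.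
Proof.
  unfold frob. rewrite <- rsum_scal, <- rsum_plus. apply rsum_ext; intros.
  rewrite <- rsum_scal, <- rsum_plus. apply rsum_ext; intros. ring.
Qed.

Lemma frob_lin_r n A M M' c :
  frob n A (fun r s => c * M r s + M' r s) = c * frob n A M + frob n A M'.
Proof.
  unfold frob. rewrite <- rsum_scal, <- rsum_plus. apply rsum_ext; intros.
  rewrite <- rsum_scal, <- rsum_plus. apply rsum_ext; intros. ring.
Qed.

Lemma frob_outer n u B : frob n (fun r s => u r * u s) B = quadf n B u.
Proof. unfold frob, quadf. apply rsum_ext; intros. apply rsum_ext; intros. ring. Qed.

Lemma quadf_S n M v : quadf (S n) M v = quadf n M v
  + rsum n (fun i => v i * M i n * v n) + rsum n (fun j => v n * M n j * v j)
  + v n * M n n * v n.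
Proof. unfold quadf. cbn [rsum]. rewrite rsum_plus. lra. Qed.

Lemma frob_S n A B : frob (S n) A B = frob n A B
  + rsum n (fun r => A r n * B r n) + rsum n (fun s => A n s * B n s) + A n n * B n n.
Proof. unfold frob. cbn [rsum]. rewrite rsum_plus. lra. Qed.

Lemma quadf_shift n M v : quadf (S n) M v =
  v 0%nat * M 0%nat 0%nat * v 0%nat + rsum n (fun l => v 0%nat * M 0%nat (S l) * v (S l))
  + rsum n (fun k => v (S k) * M (S k) 0%nat * v 0%nat)
  + quadf n (fun k l => M (S k) (S l)) (fun k => v (S k)).
Proof.
  unfold quadf. rewrite rsum_shift, (rsum_shift n (fun j => v 0%nat * M 0%nat j * v j)).
  rewrite (rsum_ext n (fun i => rsum (S n) (fun j => v (S i) * M (S i) j * v j))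
    (fun k => v (S k) * M (S k) 0%nat * v 0%nat +
      rsum n (fun l => v (S k) * M (S k) (S l) * v (S l)))) by (intros; apply rsum_shift).
  rewrite rsum_plus. lra.
Qed.

Lemma frob_shift n A B : frob (S n) A B =
  A 0%nat 0%nat * B 0%nat 0%nat + rsum n (fun l => A 0%nat (S l) * B 0%nat (S l))
  + rsum n (fun k => A (S k) 0%nat * B (S k) 0%nat)
  + frob n (fun k l => A (S k) (S l)) (fun k l => B (S k) (S l)).
Proof.
  unfold frob. rewrite rsum_shift, (rsum_shift n (fun s => A 0%nat s * B 0%nat s)).
  rewrite (rsum_ext n (fun r => rsum (S n) (fun s => A (S r) s * B (S r) s))
    (fun k => A (S k) 0%nat * B (S k) 0%nat +
      rsum n (fun l => A (S k) (S l) * B (S k) (S l)))) by (intros; apply rsum_shift).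
  rewrite rsum_plus. lra.
Qed.

Lemma quadf_0 n M : quadf n M (fun _ => 0) = 0.
Proof. unfold quadf. apply rsum_0; intros. apply rsum_0; intros. ring. Qed.

Definition vset (v : vec) (n : nat) (c : R) : vec :=
  fun i => if Nat.eqb i n then c else v i.

Lemma vset_lt v n c i : (i < n)%nat -> vset v n c i = v i.
Proof.
  intros Hi. unfold vset. replace (Nat.eqb i n) with false; [reflexivity|].
  symmetry. apply Nat.eqb_neq. lia.
Qed.

Lemma vset_eq v n c : vset v n c n = c.
Proof. unfold vset. now rewrite Nat.eqb_refl. Qed.

Lemma quadf_S_symm n A v : symm (S n) A ->
  quadf (S n) A v = quadf n A v + 2 * v n * rsum n (fun j => A n j * v j) + A n n * v n * v n.
Proof.
  intros Hs. rewrite quadf_S.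
  rewrite (rsum_ext n (fun i => v i * A i n * v n) (fun j => v n * (A n j * v j)))
    by (intros; rewrite Hs by lia; ring).
  rewrite (rsum_ext n (fun j => v n * A n j * v j) (fun j => v n * (A n j * v j)))
    by (intros; ring).
  rewrite rsum_scal. ring.
Qed.

Lemma quadf_vset n A v c : symm (S n) A ->
  quadf (S n) A (vset v n c) =
  quadf n A v + 2 * c * rsum n (fun j => A n j * v j) + A n n * c * c.
Proof.
  intros Hs. rewrite quadf_S_symm, vset_eq by exact Hs.
  rewrite (quadf_extv n A _ v) by (intros; now apply vset_lt).
  rewrite (rsum_ext n _ (fun j => A n j * v j)) by (intros; now rewrite vset_lt).
  reflexivity.
Qed.

Lemma psd_restrict n B : psd (S n) B -> psd n B.
Proof.
  intros [Hs Hq]. split.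
  - intros r s Hr Hs'. apply Hs; lia.
  - intros v. specialize (Hq (vset v n 0)). rewrite quadf_vset in Hq by exact Hs. lra.
Qed.

Lemma psd_diag_nonneg n A : psd (S n) A -> 0 <= A n n.
Proof.
  intros [Hs Hq]. specialize (Hq (vset (fun _ => 0) n 1)).
  rewrite quadf_vset, quadf_0, rsum_0 in Hq by (exact Hs || (intros; ring)). lra.
Qed.

Lemma psd_row_zero n A v : psd (S n) A -> A n n = 0 -> rsum n (fun j => A n j * v j) = 0.
Proof.
  intros [Hs Hq] Ha. set (s := rsum n (fun j => A n j * v j)).
  destruct (Req_dec s 0) as [|Hs0]; [assumption|exfalso].
  set (c := quadf n A v).
  specialize (Hq (vset v n (- (Rabs c + 1) / (2 * s)))).
  rewrite quadf_vset, Ha in Hq by exact Hs. fold s c in Hq.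
  assert (2 * (- (Rabs c + 1) / (2 * s)) * s = - (Rabs c + 1)) by (field; exact Hs0).
  pose proof (Rle_abs c). lra.
Qed.

Definition schur (A : mat) (n : nat) : mat := fun r s => A r s - A n r * A n s / A n n.

Lemma schur_symm n A : symm (S n) A -> symm n (schur A n).
Proof. intros H r s Hr Hs. unfold schur. rewrite (H r s) by lia. unfold Rdiv. ring. Qed.

Lemma quadf_schur n A v :
  quadf n (schur A n) v = quadf n A v
    - rsum n (fun j => A n j * v j) * rsum n (fun j => A n j * v j) / A n n.
Proof.
  rewrite (quadf_ext n _ (fun r s => A r s + (- / A n n) * (A n r * A n s)))
    by (intros; unfold schur, Rdiv; ring).
  rewrite quadf_lin.
  replace (quadf n (fun r s => A n r * A n s) v)
    with (rsum n (fun j => A n j * v j) * rsum n (fun j => A n j * v j)).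
  - unfold Rdiv. ring.
  - unfold quadf. rewrite <- rsum_mult. apply rsum_ext; intros. apply rsum_ext; intros. ring.
Qed.

Lemma quadf_vset_schur n A v : symm (S n) A -> A n n <> 0 ->
  quadf (S n) A (vset v n (- rsum n (fun j => A n j * v j) / A n n)) = quadf n (schur A n) v.
Proof.
  intros Hs Ha. rewrite quadf_vset, quadf_schur by exact Hs. field. exact Ha.
Qed.

Lemma psd_schur n A : psd (S n) A -> 0 < A n n -> psd n (schur A n).
Proof.
  intros [Hs Hq] Ha. split; [now apply schur_symm|].
  intros v. rewrite <- quadf_vset_schur by (auto; lra). apply Hq.
Qed.

Lemma pd_schur n A : pd (S n) A -> 0 < A n n -> pd n (schur A n).
Proof.
  intros [Hs Hq] Ha. split; [now apply schur_symm|].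
  intros v [i [Hi Hvi]]. rewrite <- quadf_vset_schur by (auto; lra). apply Hq.
  exists i. split; [lia|]. now rewrite vset_lt.
Qed.

Lemma frob_schur_split n A B : symm (S n) A -> A n n <> 0 ->
  frob (S n) A B = frob n (schur A n) B + / A n n * quadf (S n) B (fun i => A n i).
Proof.
  intros Hs Ha.
  assert (Hsplit : frob (S n) A B = frob (S n) (schur A n) B
      + / A n n * frob (S n) (fun r s => A n r * A n s) B).
  { rewrite <- frob_lin_l. apply frob_ext.
    intros; split; [unfold schur; field; exact Ha|reflexivity]. }
  assert (Hedge : frob (S n) (schur A n) B = frob n (schur A n) B).
  { rewrite frob_S, (rsum_0 n (fun r => schur A n r n * B r n)),
      (rsum_0 n (fun s => schur A n n s * B n s)); unfold schur.
    - field_simplify; [lra|exact Ha].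
    - intros. field_simplify; [lra|exact Ha].
    - intros i Hi. rewrite (Hs i n) by lia. field_simplify; [lra|exact Ha]. }
  rewrite Hsplit, Hedge, frob_outer. reflexivity.
Qed.

(* Peel off the last row of A: through its Schur complement when A_nn > 0, and when A_nn = 0
   that row of A vanishes. *)
Lemma frob_psd_nonneg n : forall A B, psd n A -> psd n B -> 0 <= frob n A B.
Proof.
  induction n as [|n IH]; intros A B HA HB; [unfold frob; simpl; lra|].
  pose proof (psd_diag_nonneg n A HA) as Ha.
  pose proof (proj1 HA) as HsA.
  destruct (Rle_lt_or_eq_dec _ _ Ha) as [Hpos|Hzero].
  - rewrite frob_schur_split by (auto; lra).
    assert (0 <= frob n (schur A n) B).
    { apply IH; [now apply psd_schur|now apply psd_restrict]. }
    assert (0 <= / A n n * quadf (S n) B (fun i => A n i)).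
    { apply Rmult_le_pos; [left; now apply Rinv_0_lt_compat|apply HB]. }
    lra.
  - pose proof (proj1 HB) as HsB.
    rewrite frob_S, <- Hzero, Rmult_0_l, Rplus_0_r.
    rewrite (rsum_ext n (fun r => A r n * B r n) (fun j => A n j * B n j))
      by (intros; rewrite HsA, HsB by lia; reflexivity).
    rewrite (psd_row_zero n A (fun j => B n j)) by auto.
    assert (0 <= frob n A B) by (apply IH; now apply psd_restrict).
    lra.
Qed.

(** * Coercivity of positive definite forms *)

Definition sumsq (n : nat) (v : vec) : R := rsum n (fun i => v i * v i).

Lemma sumsq_nonneg n v : 0 <= sumsq n v.
Proof. apply rsum_nonneg. intros. nra. Qed.

Lemma cauchy_schwarz n b v :
  rsum n (fun j => b j * v j) * rsum n (fun j => b j * v j) <= sumsq n b * sumsq n v.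
Proof.
  unfold sumsq. induction n; simpl; [lra|].
  set (s := rsum n (fun j => b j * v j)) in *.
  set (B := rsum n (fun j => b j * b j)) in *.
  set (V := rsum n (fun j => v j * v j)) in *.
  assert (HB : 0 <= B) by (apply rsum_nonneg; intros; nra).
  assert (HV : 0 <= V) by (apply rsum_nonneg; intros; nra).
  set (x := b n). set (y := v n). clearbody s B V x y.
  (* the cross term 2 s x y is bounded by the AM-GM mean of B y^2 and x^2 V *)
  assert (Hsq : (2 * s * x * y) * (2 * s * x * y) <= (B * y * y + x * x * V) * (B * y * y + x * x * V)).
  { pose proof (Rle_0_sqr (B * y * y - x * x * V)) as Hq. unfold Rsqr in Hq.
    assert (0 <= 4 * (x * x * y * y) * (B * V - s * s)).
    { apply Rmult_le_pos; [|lra]. pose proof (Rle_0_sqr (x * y)). unfold Rsqr in *. nra. }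
    nra. }
  assert (2 * s * x * y <= B * y * y + x * x * V).
  { assert (0 <= B * y * y + x * x * V) by nra.
    destruct (Rle_or_lt (2 * s * x * y) (B * y * y + x * x * V)); [assumption|nra]. }
  nra.
Qed.

Lemma pd_diag_pos n A : pd (S n) A -> 0 < A n n.
Proof.
  intros [Hs Hq]. specialize (Hq (vset (fun _ => 0) n 1)).
  rewrite quadf_vset, quadf_0, rsum_0 in Hq by (exact Hs || (intros; ring)).
  enough (0 < 0 + 2 * 1 * 0 + A n n * 1 * 1) by lra.
  apply Hq. exists n. rewrite vset_eq. split; [lia|lra].
Qed.

Lemma pd_coercive n : forall A, pd n A -> exists c, 0 < c /\
  forall v, c * sumsq n v <= quadf n A v.
Proof.
  induction n as [|n IH]; intros A HA.
  { exists 1. split; [lra|]. intros v. unfold sumsq, quadf. simpl. lra. }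
  pose proof (pd_diag_pos n A HA) as Ha. set (a := A n n) in *.
  destruct (IH (schur A n) (pd_schur n A HA Ha)) as [c' [Hc' Hcoer]].
  set (K := sumsq n (fun j => A n j)).
  pose proof (sumsq_nonneg n (fun j => A n j)) as HK. fold K in HK.
  set (M := 1 + 2 * K / (a * a)).
  assert (HM : 1 <= M).
  { assert (0 <= 2 * K / (a * a)) by (apply Rmult_le_pos; [lra|left; apply Rinv_0_lt_compat; nra]).
    unfold M. lra. }
  set (c := Rmin (a / 2) (c' / M)).
  assert (Hc0 : 0 < c) by (apply Rmin_pos; [lra|apply Rdiv_lt_0_compat; lra]).
  assert (Hca : c <= a / 2) by apply Rmin_l.
  assert (HcM : c * M <= c').
  { pose proof (Rmin_r (a / 2) (c' / M)) as H. fold c in H.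
    apply (Rmult_le_compat_r M) in H; [|lra]. unfold Rdiv in H.
    rewrite Rmult_assoc, Rinv_l in H; lra. }
  exists c. split; [exact Hc0|]. intros v.
  set (s := rsum n (fun j => A n j * v j)).
  set (V := sumsq n v). pose proof (sumsq_nonneg n v) as HV. fold V in HV.
  assert (Hcs : s * s <= K * V) by apply cauchy_schwarz.
  specialize (Hcoer v). rewrite quadf_schur in Hcoer. fold s a V in Hcoer.
  (* complete the square in the last coordinate *)
  set (y := v n + s / a).
  assert (Hq : quadf (S n) A v = (quadf n A v - s * s / a) + a * (y * y)).
  { rewrite quadf_S_symm by exact (proj1 HA). fold s a. unfold y. field. lra. }
  assert (Hvn : v n * v n <= 2 * (y * y) + 2 * (K * V) / (a * a)).
  { replace (v n) with (y - s / a) by (unfold y; field; lra).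
    assert (s * s / (a * a) <= K * V / (a * a)).
    { apply Rmult_le_compat_r; [left; apply Rinv_0_lt_compat; nra|exact Hcs]. }
    assert (s / a * (s / a) = s * s / (a * a)) by (field; lra).
    assert (2 * (K * V) / (a * a) = 2 * (K * V / (a * a))) by (field; lra).
    pose proof (Rle_0_sqr (y + s / a)). unfold Rsqr in *. nra. }
  assert (Hsum : sumsq (S n) v <= 2 * (y * y) + M * V).
  { unfold sumsq. simpl. fold (sumsq n v) V.
    assert (2 * (K * V) / (a * a) = 2 * K / (a * a) * V) by (field; lra).
    unfold M. lra. }
  rewrite Hq.
  assert (c * sumsq (S n) v <= c * (2 * (y * y) + M * V)) by (apply Rmult_le_compat_l; lra).
  assert (0 <= y * y) by nra.
  nra.
Qed.

Lemma quadf_abs_bound n B v :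
  Rabs (quadf n B v) <= rsum n (fun i => rsum n (fun j => Rabs (B i j))) * sumsq n v.
Proof.
  assert (Hterm : forall i j, (i < n)%nat -> (j < n)%nat ->
             Rabs (v i * B i j * v j) <= Rabs (B i j) * sumsq n v).
  { intros i j Hi Hj.
    assert (v i * v i <= sumsq n v) by (apply (rsum_ge_term n (fun i => v i * v i)); auto; intros; nra).
    assert (v j * v j <= sumsq n v) by (apply (rsum_ge_term n (fun i => v i * v i)); auto; intros; nra).
    replace (v i * B i j * v j) with (B i j * (v i * v j)) by ring.
    rewrite Rabs_mult. apply Rmult_le_compat_l; [apply Rabs_pos|].
    apply Rabs_le. split; nra. }
  rewrite Rmult_comm, <- rsum_scal. apply Rabs_le. unfold quadf. split.
  - rewrite <- rsum_opp. apply rsum_le. intros i Hi.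
    rewrite <- rsum_scal, <- rsum_opp. apply rsum_le. intros j Hj.
    pose proof (Hterm i j Hi Hj). pose proof (Rle_abs (- (v i * B i j * v j))).
    rewrite Rabs_Ropp in *. lra.
  - apply rsum_le. intros i Hi. rewrite <- rsum_scal. apply rsum_le. intros j Hj.
    pose proof (Hterm i j Hi Hj). pose proof (Rle_abs (v i * B i j * v j)). lra.
Qed.

Lemma pd_perturb n A B : pd n A -> exists e, 0 < e /\
  forall t v, Rabs t <= e -> 0 <= quadf n A v + t * quadf n B v.
Proof.
  intros HA. destruct (pd_coercive n A HA) as [c [Hc Hcoer]].
  set (K := rsum n (fun i => rsum n (fun j => Rabs (B i j)))).
  assert (HK : 0 <= K) by (apply rsum_nonneg; intros; apply rsum_nonneg; intros; apply Rabs_pos).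
  exists (c / (K + 1)). split; [apply Rdiv_lt_0_compat; lra|].
  intros t v Ht. specialize (Hcoer v).
  pose proof (sumsq_nonneg n v) as HV. pose proof (quadf_abs_bound n B v) as HB. fold K in HB.
  assert (Rabs (t * quadf n B v) <= c / (K + 1) * (K * sumsq n v)).
  { rewrite Rabs_mult. apply Rmult_le_compat; auto; apply Rabs_pos. }
  assert (c / (K + 1) * K <= c).
  { apply (Rmult_le_reg_r (K + 1)); [lra|]. field_simplify; [|lra]. nra. }
  pose proof (Rle_abs (- (t * quadf n B v))). rewrite Rabs_Ropp in *. nra.
Qed.

Lemma lsum_ext {A} (f g : A -> R) l : (forall a, f a = g a) -> lsum f l = lsum g l.
Proof. intros H. induction l; simpl; [reflexivity|]. now rewrite H, IHl. Qed.

Lemma lsum_cons {A} (f : A -> R) a l : lsum f (a :: l) = f a + lsum f l.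
Proof. reflexivity. Qed.

Lemma lsum_app {A} (f : A -> R) l1 l2 : lsum f (l1 ++ l2) = lsum f l1 + lsum f l2.
Proof. induction l1; unfold lsum in *; simpl; [lra|]. rewrite IHl1. lra. Qed.

Lemma lsum_map {A B} (f : B -> R) (h : A -> B) l : lsum f (map h l) = lsum (fun a => f (h a)) l.
Proof. induction l; unfold lsum in *; simpl; [reflexivity|]. now rewrite IHl. Qed.

Lemma lsum_scal {A} (f : A -> R) c l : lsum (fun a => c * f a) l = c * lsum f l.
Proof. induction l; unfold lsum in *; simpl; [lra|]. rewrite IHl. lra. Qed.

Lemma lsum_le {A} (f g : A -> R) l : Forall (fun a => f a <= g a) l -> lsum f l <= lsum g l.
Proof. induction 1; unfold lsum in *; simpl; lra. Qed.

Lemma in_conv_single n (C : vec -> R -> Prop) x t : C x t -> in_conv n C x t.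
Proof.
  intros H. exists ((1, (x, t)) :: nil). unfold lsum; simpl.
  split; [constructor; [simpl; split; [lra|exact H]|constructor]|].
  repeat split; intros; lra.
Qed.

Lemma in_conv_mono n (C1 C2 : vec -> R -> Prop) x t :
  (forall x t, C1 x t -> C2 x t) -> in_conv n C1 x t -> in_conv n C2 x t.
Proof.
  intros H [L [HF HL]]. exists L. split; [|exact HL].
  eapply Forall_impl; [|exact HF]. simpl. intros a [Ha Hb]. auto.
Qed.

Lemma in_conv_flatten_list n (C : vec -> R -> Prop) L :
  Forall (fun a => 0 <= fst a /\ in_conv n C (fst (snd a)) (snd (snd a))) L ->
  exists L', Forall (fun a => 0 <= fst a /\ C (fst (snd a)) (snd (snd a))) L' /\
    lsum (fun a => fst a) L' = lsum (fun a => fst a) L /\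
    (forall j, (j < n)%nat ->
       lsum (fun a => fst a * fst (snd a) j) L' = lsum (fun a => fst a * fst (snd a) j) L) /\
    lsum (fun a => fst a * snd (snd a)) L' = lsum (fun a => fst a * snd (snd a)) L.
Proof.
  induction 1 as [|[lam [xa ta]] L [Hl [La [HFa [H1a [Hxa Hta]]]]] HF IH].
  { exists nil. repeat split; auto. }
  destruct IH as [L' [HF' [H1' [Hx' Ht']]]]. cbn [fst snd] in *.
  exists (map (fun b => (lam * fst b, snd b)) La ++ L').
  split; [|split; [|split]]; try intros j Hj; rewrite ?lsum_cons, ?lsum_app, ?lsum_map; simpl.
  - apply Forall_app. split; [|exact HF']. apply Forall_map.
    eapply Forall_impl; [|exact HFa]. simpl. intros a [Ha HSa]. split; [nra|exact HSa].
  - rewrite (lsum_scal (fun a => fst a)), H1a, H1'. ring.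
  - rewrite (lsum_ext (fun a : R * (vec * R) => lam * fst a * fst (snd a) j)
               (fun a => lam * (fst a * fst (snd a) j))) by (intros; ring).
    rewrite lsum_scal, <- Hxa, Hx' by exact Hj. reflexivity.
  - rewrite (lsum_ext (fun a : R * (vec * R) => lam * fst a * snd (snd a))
               (fun a => lam * (fst a * snd (snd a)))) by (intros; ring).
    rewrite lsum_scal, <- Hta, Ht'. reflexivity.
Qed.

Lemma in_conv_flatten n (C : vec -> R -> Prop) x t :
  in_conv n (in_conv n C) x t -> in_conv n C x t.
Proof.
  intros [L [HF [H1 [Hx Ht]]]].
  destruct (in_conv_flatten_list n C L HF) as [L' [HF' [H1' [Hx' Ht']]]].
  exists L'. repeat split.
  - exact HF'.
  - now rewrite H1'.
  - intros j Hj. now rewrite Hx', Hx.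
  - now rewrite Ht', Ht.
Qed.

(** * Linear dependence and affine dimension *)

Definition lin_dep (m d : nat) (w : nat -> vec) : Prop :=
  exists l : nat -> R, (forall j, (j < m)%nat -> rsum d (fun k => l k * w k j) = 0) /\
    exists k, (k < d)%nat /\ l k <> 0.

(* Gaussian elimination with pivot w_d(m). *)
Lemma lin_dep_pivot_last m d (w : nat -> vec) :
  (forall d w, (m < d)%nat -> lin_dep m d w) ->
  (m < d)%nat -> w d m <> 0 -> lin_dep (S m) (S d) w.
Proof.
  intros IH Hd Hw.
  set (u := fun k j => w k j - w k m / w d m * w d j).
  destruct (IH d u Hd) as [l [Hl [k0 [Hk0 Hl0]]]].
  set (R0 := rsum d (fun k => l k * w k m)).
  assert (Hu : forall j, (j < S m)%nat -> rsum d (fun k => l k * u k j) = 0).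
  { intros j Hj. destruct (Nat.eq_dec j m) as [->|Hne]; [|apply Hl; lia].
    apply rsum_0. intros. unfold u. field. exact Hw. }
  exists (fun k => if (k <? d)%nat then l k else - R0 / w d m). split.
  - intros j Hj. specialize (Hu j Hj). simpl. rewrite Nat.ltb_irrefl.
    rewrite (rsum_ext d _ (fun k => l k * w k j))
      by (intros k Hk; apply Nat.ltb_lt in Hk; now rewrite Hk).
    unfold u in Hu.
    rewrite (rsum_ext d _ (fun k => l k * w k j + (- (w d j / w d m)) * (l k * w k m))),
      rsum_plus, rsum_scal in Hu by (intros; field; exact Hw).
    fold R0 in Hu.
    assert (- R0 / w d m * w d j = - (w d j / w d m) * R0) by (field; exact Hw). lra.
  - exists k0. split; [lia|]. apply Nat.ltb_lt in Hk0 as Hk. now rewrite Hk.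
Qed.

Lemma lin_dep_shear m d p (w : nat -> vec) : (p < d)%nat ->
  lin_dep m (S d) (fun k => if Nat.eqb k d then (fun j => w d j + w p j) else w k) ->
  lin_dep m (S d) w.
Proof.
  intros Hp [l [Hl [k0 [Hk0 Hl0]]]].
  assert (Hdp : Nat.eqb d p = false) by (apply Nat.eqb_neq; lia).
  exists (fun k => if Nat.eqb k p then l p + l d else l k). split.
  - intros j Hj. specialize (Hl j Hj). simpl in Hl |- *. rewrite Hdp.
    rewrite Nat.eqb_refl in Hl.
    rewrite (rsum_ext d _ (fun k => l k * w k j)) in Hl
      by (intros k Hk; replace (Nat.eqb k d) with false by (symmetry; apply Nat.eqb_neq; lia);
          reflexivity).
    rewrite (rsum_update d (fun k => l k * w k j) _ p) by
      (lia || (intros k Hk Hkp; apply Nat.eqb_neq in Hkp; now rewrite Hkp)).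
    rewrite Nat.eqb_refl. lra.
  - destruct (Req_dec (l d) 0) as [Hz|Hnz].
    + exists k0. split; [exact Hk0|]. destruct (Nat.eqb_spec k0 p) as [->|]; [lra|exact Hl0].
    + exists d. split; [lia|]. now rewrite Hdp.
Qed.

Lemma lin_dep_of_lt m : forall d w, (m < d)%nat -> lin_dep m d w.
Proof.
  induction m as [|m IH]; intros d w Hd.
  { exists (fun _ => 1). split; [intros; lia|]. exists 0%nat. split; [lia|lra]. }
  destruct d as [|d]; [lia|].
  destruct (classic (exists p, (p < S d)%nat /\ w p m <> 0)) as [[p [Hp Hwp]]|Hno].
  - destruct (Req_dec (w d m) 0) as [Hz|Hnz].
    + assert (p <> d) by (intros ->; contradiction).
      apply (lin_dep_shear _ _ p); [lia|].
      apply lin_dep_pivot_last; [exact IH|lia|].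
      rewrite Nat.eqb_refl, Hz. lra.
    + apply lin_dep_pivot_last; [exact IH|lia|exact Hnz].
  - destruct (IH (S d) w ltac:(lia)) as [l [Hl Hk]].
    exists l. split; [|exact Hk]. intros j Hj.
    destruct (Nat.eq_dec j m) as [->|]; [|apply Hl; lia].
    apply rsum_0. intros k Hk'.
    destruct (Req_dec (w k m) 0) as [->|Hnz]; [ring|].
    exfalso. apply Hno. eauto.
Qed.

Lemma has_aff_indep_bound m C d : has_aff_indep m C d -> (d <= m)%nat.
Proof.
  intros [p0 [ps [Hlen [_ [_ Hai]]]]].
  destruct (Compare_dec.le_lt_dec d m) as [|Hlt]; [assumption|exfalso].
  destruct (lin_dep_of_lt m d (fun k j => nth k ps p0 (S j) - p0 (S j)) Hlt)
    as [l [Hl [k [Hk Hlk]]]].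
  apply Hlk, (Hai l); [|lia].
  intros [|j] Hj; [lia|]. rewrite Hlen. apply Hl. lia.
Qed.

Lemma has_aff_indep_pred m C d : has_aff_indep m C (S d) -> has_aff_indep m C d.
Proof.
  intros [p0 [ps [Hlen [Hp0 [HF Hai]]]]].
  exists p0, (firstn d ps). split; [apply firstn_length_le; lia|]. split; [exact Hp0|]. split.
  - rewrite <- (firstn_skipn d ps) in HF. apply Forall_app in HF. tauto.
  - intros l Hl k Hk.
    rewrite firstn_length_le in Hk, Hl by lia.
    set (l' := fun k => if (k <? d)%nat then l k else 0).
    assert (Hl' : forall k, (k < length ps)%nat -> l' k = 0).
    { apply Hai. intros j Hj. rewrite Hlen. cbn [rsum].
      replace (l' d) with 0 by (unfold l'; now rewrite Nat.ltb_irrefl).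
      rewrite Rmult_0_l, Rplus_0_r, <- (Hl j Hj). apply rsum_ext. intros i Hi.
      unfold l'. apply Nat.ltb_lt in Hi as Hi'. rewrite Hi', nth_firstn, Hi'. reflexivity. }
    specialize (Hl' k ltac:(lia)). unfold l' in Hl'.
    apply Nat.ltb_lt in Hk. now rewrite Hk in Hl'.
Qed.

Lemma AffDim_le m C d d' : AffDim m C d -> AffDim m C d' -> (d <= d')%nat.
Proof.
  intros [H _] [_ H']. destruct (Compare_dec.le_lt_dec d d') as [|Hlt]; [assumption|].
  exfalso. apply H'. clear H'.
  induction Hlt as [|d Hle IHle]; [exact H|].
  apply IHle. now apply has_aff_indep_pred.
Qed.

(** * The semidefinite relaxation *)

Lemma frob_comm n A B : frob n A B = frob n B A.
Proof.
  unfold frob. apply rsum_ext; intros. apply rsum_ext; intros. ring.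
Qed.

Lemma frob_minus_r n A X Y :
  frob n A (fun k l => X k l - Y k l) = frob n A X - frob n A Y.
Proof.
  unfold frob. rewrite <- rsum_minus. apply rsum_ext; intros.
  rewrite <- rsum_minus. apply rsum_ext; intros. ring.
Qed.

Section Lifting.
Variable P : qcqp.

Lemma frob_Qmat_Ymat i x X : frob (dimN P + 1) (Qmat P i) (Ymat x X) =
  qf P i x + frob (dimN P) (Am P i) (fun k l => X k l - x k * x l).
Proof.
  rewrite Nat.add_1_r, frob_shift. unfold Qmat, Ymat. cbn beta iota.
  change (fun k l => Am P i k l) with (Am P i). change (fun k l => X k l) with X.
  rewrite frob_minus_r, (frob_comm _ (Am P i) (fun k l => x k * x l)), frob_outer.
  unfold qf. lra.
Qed.

Lemma psd_Ymat_schur x X : symm (dimN P) X -> psd (dimN P + 1) (Ymat x X) ->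
  psd (dimN P) (fun k l => X k l - x k * x l).
Proof.
  intros HsX [_ HqY]. split.
  - intros r s Hr Hs. rewrite HsX by auto. ring.
  - intros v. set (s := rsum (dimN P) (fun l => x l * v l)).
    specialize (HqY (fun r => match r with O => - s | S k => v k end)).
    rewrite Nat.add_1_r, quadf_shift in HqY. unfold Ymat in HqY. cbn beta iota in HqY.
    rewrite (rsum_ext _ (fun l => - s * x l * v l) (fun l => (- s) * (x l * v l))),
      (rsum_ext _ (fun k => v k * x k * - s) (fun k => (- s) * (x k * v k))),
      rsum_scal in HqY by (intros; ring). fold s in HqY.
    replace (quadf (dimN P) (fun k l => X k l - x k * x l) v)
      with (quadf (dimN P) X v - s * s).
    + change (fun k l => X k l) with X in HqY. change (fun k => v k) with v in HqY. nra.
    + unfold quadf, s. rewrite <- rsum_mult, <- rsum_minus. apply rsum_ext; intros.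
      rewrite <- rsum_minus. apply rsum_ext; intros. ring.
Qed.

Lemma frob_Amat g Z : frob (dimN P) (Amat P g) Z =
  frob (dimN P) (Am P 0) Z + rsum1 (mm P) (fun i => g i * frob (dimN P) (Am P i) Z).
Proof.
  unfold Amat, frob, rsum1.
  rewrite (rsum_ext (mm P) _ (fun i => rsum (dimN P) (fun r => rsum (dimN P)
             (fun s => g (S i) * Am P (S i) r s * Z r s)))).
  2:{ intros. rewrite <- rsum_scal. apply rsum_ext; intros.
      rewrite <- rsum_scal. apply rsum_ext; intros. ring. }
  rewrite (rsum_comm (mm P)), <- rsum_plus. apply rsum_ext; intros.
  rewrite (rsum_comm (mm P)), <- rsum_plus. apply rsum_ext; intros.
  rewrite Rmult_plus_distr_r. f_equal.
  rewrite Rmult_comm, <- rsum_scal. apply rsum_ext; intros. ring.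
Qed.

Lemma weak_duality x t g : inDSDP P x t -> inGamma P g -> qg P g x <= 2 * t.
Proof.
  intros [X [[HsX [HpY [Hin Heq]]] Hobj]] [HpA Hg]. cbv zeta in *.
  set (Z := fun k l => X k l - x k * x l).
  pose proof (frob_psd_nonneg _ _ _ HpA (psd_Ymat_schur x X HsX HpY)) as HF. fold Z in HF.
  rewrite frob_Amat in HF. rewrite frob_Qmat_Ymat in Hobj. fold Z in Hobj.
  assert (Hsum : rsum1 (mm P) (fun i => g i * (qf P i x + frob (dimN P) (Am P i) Z)) <= 0).
  { unfold rsum1. rewrite <- (rsum_0 (mm P) (fun _ => 0)) by auto. apply rsum_le. intros i Hi.
    unfold Z. rewrite <- frob_Qmat_Ymat.
    destruct (Compare_dec.le_lt_dec (S i) (mI P)).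
    - assert (0 <= g (S i)) by (apply Hg; lia).
      assert (frob (dimN P + 1) (Qmat P (S i)) (Ymat x X) <= 0) by (apply Hin; lia). nra.
    - rewrite Heq by (unfold mm in *; lia). lra. }
  unfold qg, rsum1 in *.
  rewrite (rsum_ext _ _ (fun i => g (S i) * qf P (S i) x + g (S i) * frob (dimN P) (Am P (S i)) Z)),
    rsum_plus in Hsum by (intros; ring).
  lra.
Qed.

Lemma sdp_feasible_rank_one x : feasible P x ->
  sdp_feasible P x (fun k l => x k * x l) /\
  frob (dimN P + 1) (Qmat P 0) (Ymat x (fun k l => x k * x l)) = qf P 0 x.
Proof.
  intros [Hin Heq].
  assert (Hf : forall i, frob (dimN P + 1) (Qmat P i) (Ymat x (fun k l => x k * x l)) = qf P i x).
  { intros i. rewrite frob_Qmat_Ymat.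
    replace (frob _ _ _) with 0; [lra|].
    symmetry. unfold frob. apply rsum_0; intros. apply rsum_0; intros. ring. }
  split; [|apply Hf]. split; [|split; [|split]].
  - intros r s _ _. ring.
  - split.
    + intros [|r] [|s] _ _; simpl; ring.
    + intros w. rewrite Nat.add_1_r, quadf_shift. unfold Ymat. cbn beta iota.
      set (s := rsum (dimN P) (fun l => x l * w (S l))).
      rewrite (rsum_ext _ (fun l => w 0%nat * x l * w (S l)) (fun l => w 0%nat * (x l * w (S l)))),
        (rsum_ext _ (fun k => w (S k) * x k * w 0%nat) (fun k => w 0%nat * (x k * w (S k)))),
        rsum_scal by (intros; ring). fold s.
      replace (quadf (dimN P) (fun k l => x k * x l) (fun k => w (S k))) with (s * s)
        by (unfold s, quadf; rewrite <- rsum_mult; apply rsum_ext; intros; apply rsum_ext; intros; ring).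
      pose proof (Rle_0_sqr (w 0%nat + s)). unfold Rsqr in *. nra.
  - intros i Hi. rewrite Hf. now apply Hin.
  - intros i Hi. rewrite Hf. now apply Heq.
Qed.

Lemma inD_inDSDP x t : inD P x t -> inDSDP P x t.
Proof.
  intros [Hq Hf]. destruct (sdp_feasible_rank_one x Hf) as [Hs Hobj].
  exists (fun k l => x k * x l). split; [exact Hs|]. cbv zeta. now rewrite Hobj.
Qed.

End Lifting.

Lemma psd_ext n M M' :
  (forall r s, (r < n)%nat -> (s < n)%nat -> M r s = M' r s) -> psd n M -> psd n M'.
Proof.
  intros H [Hs Hq]. split.
  - intros r s Hr Hs'. rewrite <- !H by auto. now apply Hs.
  - intros v. rewrite <- (quadf_ext n M M') by exact H. apply Hq.
Qed.

Section Convexity.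
Variable P : qcqp.

(* The homogenised SDP constraints; D_SDP is the slice Y_00 = 1 of this convex cone. *)
Definition sdp_cone (Z : mat) : Prop :=
  psd (dimN P + 1) Z /\
  (forall i, (1 <= i <= mI P)%nat -> frob (dimN P + 1) (Qmat P i) Z <= 0) /\
  (forall i, (mI P + 1 <= i <= mm P)%nat -> frob (dimN P + 1) (Qmat P i) Z = 0).

Lemma frob_0_r n A : frob n A (fun _ _ => 0) = 0.
Proof. unfold frob. apply rsum_0; intros. apply rsum_0; intros. ring. Qed.

Lemma sdp_cone_0 : sdp_cone (fun _ _ => 0).
Proof.
  split; [|split]; intros; rewrite ?frob_0_r; try lra.
  split; [intros r s _ _; reflexivity|]. intros v. unfold quadf.
  rewrite rsum_0; [lra|]. intros; apply rsum_0; intros; ring.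
Qed.

Lemma sdp_cone_comb lam Z1 Z2 : 0 <= lam -> sdp_cone Z1 -> sdp_cone Z2 ->
  sdp_cone (fun r s => lam * Z1 r s + Z2 r s).
Proof.
  intros Hl [[Hs1 Hq1] [Hin1 Heq1]] [[Hs2 Hq2] [Hin2 Heq2]].
  split; [split|split].
  - intros r s Hr Hs. now rewrite Hs1, Hs2.
  - intros v. rewrite (quadf_ext _ _ (fun r s => Z2 r s + lam * Z1 r s)) by (intros; ring).
    rewrite quadf_lin. specialize (Hq1 v). specialize (Hq2 v). nra.
  - intros i Hi. rewrite frob_lin_r. specialize (Hin1 i Hi). specialize (Hin2 i Hi). nra.
  - intros i Hi. rewrite frob_lin_r, Heq1, Heq2 by exact Hi. ring.
Qed.

Lemma sdp_cone_ext Z Z' :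
  (forall r s, (r < dimN P + 1)%nat -> (s < dimN P + 1)%nat -> Z r s = Z' r s) ->
  sdp_cone Z -> sdp_cone Z'.
Proof.
  intros H [Hp [Hin Heq]].
  assert (Hf : forall i, frob (dimN P + 1) (Qmat P i) Z = frob (dimN P + 1) (Qmat P i) Z')
    by (intros; apply frob_ext; auto).
  split; [|split].
  - exact (psd_ext _ _ _ H Hp).
  - intros i Hi. rewrite <- Hf. auto.
  - intros i Hi. rewrite <- Hf. auto.
Qed.

Lemma sdp_cone_lsum L :
  Forall (fun a => 0 <= fst a /\ inDSDP P (fst (snd a)) (snd (snd a))) L ->
  exists Z, sdp_cone Z /\
    frob (dimN P + 1) (Qmat P 0) Z <= 2 * lsum (fun a => fst a * snd (snd a)) L /\
    Z 0%nat 0%nat = lsum (fun a => fst a) L /\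
    (forall l, Z 0%nat (S l) = lsum (fun a => fst a * fst (snd a) l) L) /\
    (forall k, Z (S k) 0%nat = lsum (fun a => fst a * fst (snd a) k) L).
Proof.
  induction 1 as [|[lam [xa ta]] L [Hl [X [[_ HY] Hobj]]] _ IH]; cbn [fst snd] in *.
  { exists (fun _ _ => 0). split; [exact sdp_cone_0|].
    rewrite frob_0_r. unfold lsum. simpl. repeat split; intros; lra. }
  destruct IH as [Z [HZ [Hob [H00 [H0l Hk0]]]]].
  exists (fun r s => lam * Ymat xa X r s + Z r s).
  split; [exact (sdp_cone_comb _ _ _ Hl HY HZ)|].
  rewrite !lsum_cons. cbn [fst snd]. rewrite frob_lin_r.
  repeat split; intros; simpl; rewrite ?H00, ?H0l, ?Hk0; nra.
Qed.

Lemma inDSDP_convex x t : in_conv (dimN P) (inDSDP P) x t -> inDSDP P x t.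
Proof.
  intros [L [HF [H1 [Hx Ht]]]].
  destruct (sdp_cone_lsum L HF) as [Z [HZ [Hob [H00 [H0l Hk0]]]]].
  set (X := fun k l => Z (S k) (S l)).
  assert (HZY : forall r s, (r < dimN P + 1)%nat -> (s < dimN P + 1)%nat ->
            Z r s = Ymat x X r s).
  { intros [|r] [|s] Hr Hs; simpl.
    - now rewrite H00.
    - rewrite H0l, Hx by lia. reflexivity.
    - rewrite Hk0, Hx by lia. reflexivity.
    - reflexivity. }
  pose proof (sdp_cone_ext _ _ HZY HZ) as HY.
  exists X. split.
  - split; [|exact HY]. intros r s Hr Hs. apply (proj1 (proj1 HZ)); lia.
  - cbv zeta. rewrite <- (frob_ext _ (Qmat P 0) _ Z) by (intros; split; auto).
    now rewrite Ht.
Qed.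

End Convexity.

(** * Lagrangian duality *)

Section Duality.
Variable P : qcqp.
Hypothesis Hsym : forall i, (i <= mm P)%nat -> symm (dimN P) (Am P i).

Lemma rsum1_vset m g i c h : (1 <= i <= m)%nat ->
  rsum1 m (fun k => vset g i c k * h k) = rsum1 m (fun k => g k * h k) + (c - g i) * h i.
Proof.
  intros Hi. unfold rsum1.
  rewrite (rsum_update m (fun k => g (S k) * h (S k)) _ (i - 1)); [|lia|].
  - replace (S (i - 1)) with i by lia. rewrite vset_eq. ring.
  - intros k Hk Hne. unfold vset.
    replace (Nat.eqb (S k) i) with false by (symmetry; apply Nat.eqb_neq; lia).
    reflexivity.
Qed.

Lemma Amat_vset g i c r s : (1 <= i <= mm P)%nat ->
  Amat P (vset g i c) r s = Amat P g r s + (c - g i) * Am P i r s.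
Proof. intros Hi. unfold Amat. rewrite (rsum1_vset _ g i c (fun k => Am P k r s)) by exact Hi. ring. Qed.

Lemma qg_vset g i c x : (1 <= i <= mm P)%nat ->
  qg P (vset g i c) x = qg P g x + (c - g i) * qf P i x.
Proof. intros Hi. unfold qg. rewrite (rsum1_vset _ g i c (fun k => qf P k x)) by exact Hi. ring. Qed.

Lemma Amat_symm g : symm (dimN P) (Amat P g).
Proof.
  intros r s Hr Hs. unfold Amat. rewrite (Hsym 0%nat) by (lia || auto). f_equal.
  unfold rsum1. apply rsum_ext. intros. rewrite (Hsym (S i)) by (lia || auto). reflexivity.
Qed.

(* A definite maximiser stays in Gamma under small moves of any single multiplier. *)
Lemma argmax_perturb x g i : inF P x g -> pd (dimN P) (Amat P g) -> (1 <= i <= mm P)%nat ->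
  exists e, 0 < e /\ forall t, Rabs t <= e -> ((i <= mI P)%nat -> 0 <= g i + t) ->
  t * qf P i x <= 0.
Proof.
  intros [[_ Hg] Hmax] Hpd Hi.
  destruct (pd_perturb _ _ (Am P i) Hpd) as [e [He Hp]].
  exists e. split; [exact He|]. intros t Ht Hsg.
  assert (Hin : inGamma P (vset g i (g i + t))).
  { split; [split|].
    - apply Amat_symm.
      - intros v. rewrite (quadf_ext _ _ (fun r s => Amat P g r s + t * Am P i r s))
        by (intros; rewrite Amat_vset by exact Hi; ring).
      rewrite quadf_lin. now apply Hp.
    - intros k Hk. destruct (Nat.eq_dec k i) as [->|Hne].
      + rewrite vset_eq. apply Hsg. lia.
      + unfold vset. apply Nat.eqb_neq in Hne. rewrite Hne. now apply Hg. }
  specialize (Hmax _ Hin). rewrite qg_vset in Hmax by exact Hi. lra.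
Qed.

Lemma definite_face_kkt x g i : inF P x g -> pd (dimN P) (Amat P g) -> (1 <= i <= mm P)%nat ->
  qf P i x <= 0 /\ ((mI P < i)%nat -> qf P i x = 0) /\ g i * qf P i x = 0.
Proof.
  intros HF Hpd Hi. pose proof (proj2 (proj1 HF)) as Hg.
  destruct (argmax_perturb x g i HF Hpd Hi) as [e [He H]].
  assert (Hle : qf P i x <= 0).
  { assert (e * qf P i x <= 0).
    { apply H; [rewrite Rabs_pos_eq; lra|]. intros. assert (0 <= g i) by (apply Hg; lia). lra. }
    nra. }
  destruct (Compare_dec.le_lt_dec i (mI P)) as [Hin|Heq].
  - split; [exact Hle|]. split; [lia|].
    destruct (Req_dec (g i) 0) as [->|Hnz]; [ring|].
    assert (0 <= g i) by (apply Hg; lia).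
    set (t := Rmin e (g i)).
    assert (0 < t) by (apply Rmin_pos; lra).
    assert (- t * qf P i x <= 0).
    { apply H.
      - rewrite Rabs_Ropp, Rabs_pos_eq by lra. apply Rmin_l.
      - intros. pose proof (Rmin_r e (g i)) as Ht. fold t in Ht. lra. }
    replace (qf P i x) with 0 by nra. ring.
  - assert (- e * qf P i x <= 0).
    { apply H; [rewrite Rabs_Ropp, Rabs_pos_eq; lra|lia]. }
    replace (qf P i x) with 0 by nra. split; [lra|split; [reflexivity|ring]].
Qed.

Lemma definite_face_inD x t g : inDSDP P x t -> inF P x g -> pd (dimN P) (Amat P g) -> inD P x t.
Proof.
  intros HD HF Hpd.
  pose proof (fun i Hi => definite_face_kkt x g i HF Hpd Hi) as Hkkt.
  split; [|split].
  - replace (qf P 0 x) with (qg P g x).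
    + exact (weak_duality P x t g HD (proj1 HF)).
    + unfold qg, rsum1. rewrite rsum_0; [ring|]. intros. apply Hkkt. lia.
  - intros i Hi. apply Hkkt. unfold mm. lia.
  - intros i Hi. apply Hkkt; unfold mm in *; lia.
Qed.

End Duality.

(** * Reduction to definite faces *)

Section Reduction.
Variable P : qcqp.
Hypothesis Hsym : forall i, (i <= mm P)%nat -> symm (dimN P) (Am P i).
Hypothesis HB : AssumptionB P.
Hypothesis Hsplit : forall xh th, inDSDP P xh th -> semidef_face P xh ->
  in_conv (dimN P) (fun x t => inDSDP P x t /\ affdim_gt P x xh) xh th.

Lemma face_nonempty x t : inDSDP P x t -> exists g, inF P x g.
Proof.
  intros HD. apply HB. exists (2 * t). intros g Hg. exact (weak_duality P x t g HD Hg).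
Qed.

Lemma definite_or_split x t : inDSDP P x t ->
  inD P x t \/ in_conv (dimN P) (fun y s => inDSDP P y s /\ affdim_gt P y x) x t.
Proof.
  intros HD.
  destruct (classic (exists g, inF P x g /\ pd (dimN P) (Amat P g))) as [[g [HgF Hgpd]]|Hno].
  - left. exact (definite_face_inD P Hsym x t g HD HgF Hgpd).
  - right. apply Hsplit; [exact HD|]. split; [exact (face_nonempty x t HD)|].
    intros g Hg Hpd. apply Hno. eauto.
Qed.

(* Induction on k, where m - k bounds affdim F(x) from below; since affdim F(x) <= m,
   after m + 1 splittings only definite faces remain. *)
Lemma inDSDP_in_conv_D_aux k : forall x t, inDSDP P x t ->
  (forall d, AffDim (mm P) (inF P x) d -> (mm P < d + k)%nat) ->
  in_conv (dimN P) (inD P) x t.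
Proof.
  induction k as [|k IH]; intros x t HD Hk;
    (destruct (definite_or_split x t HD) as [HDx|[L [HF HL]]]; [now apply in_conv_single|]).
  - destruct L as [|a L]; [destruct HL as [H1 _]; unfold lsum in H1; simpl in H1; lra|].
    inversion HF as [|? ? [_ [_ [d1 [d2 [_ [Hd2 _]]]]]] _]; subst.
    specialize (Hk d2 Hd2). apply proj1, has_aff_indep_bound in Hd2. lia.
  - apply in_conv_flatten. exists L. split; [|exact HL].
    eapply Forall_impl; [|exact HF]. simpl. intros a [Ha [HDa [d1 [d2 [Hd1 [Hd2 Hlt]]]]]].
    split; [exact Ha|]. apply IH; [exact HDa|]. intros d Hd.
    specialize (Hk d2 Hd2). pose proof (AffDim_le _ _ _ _ Hd1 Hd). lia.
Qed.

Lemma inDSDP_in_conv_D x t : inDSDP P x t -> in_conv (dimN P) (inD P) x t.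
Proof. intros HD. apply (inDSDP_in_conv_D_aux (S (mm P))); [exact HD|]. intros. lia. Qed.

End Reduction.

Lemma in_conv_D_lower_bound P r x t : (forall s, OptSet P s -> r <= s) ->
  in_conv (dimN P) (inD P) x t -> r <= 2 * t.
Proof.
  intros Hr [L [HF [H1 [_ Ht]]]].
  assert (lsum (fun a => (r / 2) * fst a) L <= lsum (fun a => fst a * snd (snd a)) L).
  { apply lsum_le. eapply Forall_impl; [|exact HF]. simpl. intros a [Ha [Hq Hfa]].
    assert (r <= qf P 0 (fst (snd a))) by (apply Hr; exists (fst (snd a)); auto).
    nra. }
  rewrite (lsum_scal (fun a => fst a)), H1 in H. lra.
Qed.

Lemma OptSet_SDPSet P s : OptSet P s -> SDPSet P s.
Proof.
  intros [x [Hf ->]]. destruct (sdp_feasible_rank_one P x Hf) as [Hsd Hobj].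
  exists x, (fun k l => x k * x l). split; [exact Hsd|]. cbv zeta. now rewrite Hobj.
Qed.

Lemma IsInf_eq_of_lower_bounds (S1 S2 : R -> Prop) : (forall s, S1 s -> S2 s) ->
  (forall r, (forall s, S1 s -> r <= s) -> forall s, S2 s -> r <= s) -> (exists s, S1 s) ->
  forall v, IsInf S1 v <-> IsInf S2 v.
Proof.
  intros Hsub Hlb [s0 Hs0] [r| |]; simpl.
  - split; intros [H1 H2]; split.
    + now apply Hlb.
    + intros r' Hr'. apply H2. auto.
    + auto.
    + intros r' Hr'. apply H2. now apply Hlb.
  - split; intros H; exfalso; apply (H s0); auto.
  - split; intros H r.
    + destruct (H r) as [s [Hs Hsr]]. eauto.
    + apply NNPP. intros Hn. destruct (H r) as [s [Hs Hsr]].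
      enough (r <= s) by lra.
      apply (Hlb r); [|exact Hs]. intros s' Hs'. apply Rnot_lt_le. intros Hlt. eauto.
Qed.

Theorem mainTheorem4 (P : qcqp) :
  (1 <= dimN P)%nat -> (1 <= mm P)%nat ->
  (forall i, (i <= mm P)%nat -> symm (dimN P) (Am P i)) ->
  AssumptionA P -> AssumptionB P ->
  (forall xh th, inDSDP P xh th -> semidef_face P xh ->
     in_conv (dimN P) (fun x t => inDSDP P x t /\ affdim_gt P x xh) xh th) ->
  (forall x t, in_conv (dimN P) (inD P) x t <-> inDSDP P x t) /\
  (forall v, IsInf (OptSet P) v <-> IsInf (SDPSet P) v).
Proof.
  intros _ _ Hsym [[x0 Hx0] _] HB Hsplit.
  assert (Hconv : forall x t, in_conv (dimN P) (inD P) x t <-> inDSDP P x t).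
  { split.
    - intros H. apply inDSDP_convex. exact (in_conv_mono _ _ _ _ _ (inD_inDSDP P) H).
    - exact (inDSDP_in_conv_D P Hsym HB Hsplit x t). }
  split; [exact Hconv|].
  apply IsInf_eq_of_lower_bounds.
  - apply OptSet_SDPSet.
  - intros r Hr s [x [X [Hf ->]]].
    enough (r <= 2 * (frob (dimN P + 1) (Qmat P 0) (Ymat x X) / 2)) by lra.
    apply (in_conv_D_lower_bound P r x); [exact Hr|]. apply Hconv.
    exists X. split; [exact Hf|]. cbv zeta. lra.
  - exists (qf P 0 x0), x0. split; [exact Hx0|reflexivity].
Qed.
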